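(* Suppose the AA1 policy is applied at all times (in discrete time). If $$L_{AA1}:=\max_{\pi\in[0,1]}|f_1(0,\pi)-f_0(0,\pi)|<1,$$ then $|f_A(\pi,\pi')-f_B(\pi,\pi')|\le L_{AA1}|\pi-\pi'|$ for all $\pi,\pi'\in[0,1]$, and hence $|\pi_t(1|A)-\pi_t(1|B)|\to0$ for all initial profiles (society equalizes).
   Context: Two groups $A,B$; $\neg j$ is the group other than $j$. At time $t$ group $j$ has qualification profile $\pi_t(1|j)\in[0,1]$, $\pi_t(0|j)=1-\pi_t(1|j)$. Selection rates of a policy $\tau$: $\beta_t(v;j)=\tau(v;j)\pi_t(v|j)$. Dynamics: continuously differentiable $f_0,f_1:[0,1]^2\to[0,1]$, discrete time update $\pi_{t+1}(1|j)=\pi_t(1|j)f_1(\beta_t(0;j),\beta_t(1;j))+(1-\pi_t(1|j))f_0(\beta_t(0;j),\beta_t(1;j))$. Group $j$ is advantaged at time $t$ if $\pi_t(1|j)\ge\pi_t(1|\neg j)$. The AA1 policy with respect to advantaged $j$ is $\tau(1;j)=\pi_t(1|\neg j)/\pi_t(1|j)$, $\tau(0;j)=0$, $\tau(1;\neg j)=1$, $\tau(0;\neg j)=0$, i.e. selection rates $\beta_t(0;j)=\beta_t(0;\neg j)=0$, $\beta_t(1;j)=\beta_t(1;\neg j)=\pi_t(1|\neg j)$ (the policy is defined through these rates if a denominator vanishes). ''Applying AA1 at all times'' means at every $t$ AA1 is used with respect to the group advantaged at time $t$. Writing $\pi=\pi_t(1|A)$, $\pi'=\pi_t(1|B)$,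 the resulting joint update is $\pi_{t+1}(1|A)=f_A(\pi,\pi')$, $\pi_{t+1}(1|B)=f_B(\pi,\pi')$. *)

From Stdlib Require Import Reals Lra.
Open Scope R_scope.

Definition in01 (x : R) : Prop := 0 <= x <= 1.

Definition cont2 (g : R -> R -> R) : Prop :=
  forall x y eps, 0 < eps -> exists delta, 0 < delta /\
    forall x' y', Rabs (x' - x) < delta -> Rabs (y' - y) < delta ->
      Rabs (g x' y' - g x y) < eps.

Definition C1_2 (f : R -> R -> R) : Prop :=
  exists D1 D2 : R -> R -> R,
    (forall x y, derivable_pt_lim (fun u => f u y) x (D1 x y)) /\
    (forall x y, derivable_pt_lim (fun v => f x v) y (D2 x y)) /\
    cont2 D1 /\ cont2 D2.

Definition dynamics_fun (f : R -> R -> R) : Prop :=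
  C1_2 f /\ forall b0 b1, in01 b0 -> in01 b1 -> in01 (f b0 b1).

(* One-step update of the qualification profile p of a group with
   selection rates b0 = beta(0;j), b1 = beta(1;j). *)
Definition update (f0 f1 : R -> R -> R) (p b0 b1 : R) : R :=
  p * f1 b0 b1 + (1 - p) * f0 b0 b1.

(* AA1 selection rates beta(1;.) for both groups (beta(0;.) = 0):
   the profile of the non-advantaged group. p = pi(1|A), p' = pi(1|B). *)
Definition AA1_rate (p p' : R) : R := if Rle_dec p' p then p' else p.

Definition fA (f0 f1 : R -> R -> R) (p p' : R) : R :=
  update f0 f1 p 0 (AA1_rate p p').
Definition fB (f0 f1 : R -> R -> R) (p p' : R) : R :=
  update f0 f1 p' 0 (AA1_rate p p').

(* Trajectory (pi_t(1|A), pi_t(1|B)) under AA1 applied at all times. *)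
Fixpoint traj (f0 f1 : R -> R -> R) (pA0 pB0 : R) (t : nat) : R * R :=
  match t with
  | O => (pA0, pB0)
  | S t' => let (p, p') := traj f0 f1 pA0 pB0 t' in
            (fA f0 f1 p p', fB f0 f1 p p')
  end.

Definition is_L_AA1 (f0 f1 : R -> R -> R) (L : R) : Prop :=
  (forall p, in01 p -> Rabs (f1 0 p - f0 0 p) <= L) /\
  (exists p, in01 p /\ Rabs (f1 0 p - f0 0 p) = L).

(* Under AA1 both groups are selected at the same rates (0, r), so the two
   updates differ only through the profiles: the gap is (p - p') times
   f1(0,r) - f0(0,r), with r in [0,1], hence contracts by the factor L.
   Iterating, the gap decays like L^t. *)
From Stdlib Require Import Reals Lra.
Open Scope R_scope.

Lemma Un_cv_contraction (u : nat -> R) (L : R) :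
  0 <= L < 1 -> (forall t, 0 <= u t) -> (forall t, u (S t) <= L * u t) ->
  Un_cv u 0.
Proof.
  intros [L0 L1] u0 Hstep.
  assert (Hgeom : forall t, u t <= L ^ t * u O).
  { induction t as [|t IH]; simpl; [lra|].
    rewrite Rmult_assoc; eapply Rle_trans; [apply Hstep|].
    now apply Rmult_le_compat_l. }
  intros eps Heps.
  destruct (pow_lt_1_zero L ltac:(rewrite Rabs_pos_eq; lra) (eps / (u O + 1)))
    as [N HN].
  { apply Rdiv_lt_0_compat; [lra | specialize (u0 O); lra]. }
  exists N; intros n Hn; unfold Rdist.
  rewrite Rminus_0_r, Rabs_pos_eq by apply u0.
  specialize (HN n Hn); rewrite Rabs_pos_eq in HN by (apply pow_le; lra).
  assert (Hu : 0 < u O + 1) by (specialize (u0 O); lra).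
  assert (Heq : eps / (u O + 1) * (u O + 1) = eps) by (field; lra).
  eapply Rle_lt_trans; [apply Hgeom|].
  pose proof (pow_le L n L0); pose proof (u0 O); nra.
Qed.

Lemma AA1_rate_in01 (p p' : R) : in01 p -> in01 p' -> in01 (AA1_rate p p').
Proof. unfold AA1_rate; destruct (Rle_dec p' p); auto. Qed.

Lemma update_in01 (f0 f1 : R -> R -> R) (p b0 b1 : R) :
  dynamics_fun f0 -> dynamics_fun f1 -> in01 p -> in01 b0 -> in01 b1 ->
  in01 (update f0 f1 p b0 b1).
Proof.
  intros [_ H0] [_ H1] Hp Hb0 Hb1.
  pose proof (H0 _ _ Hb0 Hb1); pose proof (H1 _ _ Hb0 Hb1).
  unfold in01, update in *; nra.
Qed.

Lemma update_sub (f0 f1 : R -> R -> R) (p p' b0 b1 : R) :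
  update f0 f1 p b0 b1 - update f0 f1 p' b0 b1 = (p - p') * (f1 b0 b1 - f0 b0 b1).
Proof. unfold update; ring. Qed.

Lemma fA_fB_lipschitz (f0 f1 : R -> R -> R) (L p p' : R) :
  (forall r, in01 r -> Rabs (f1 0 r - f0 0 r) <= L) -> in01 p -> in01 p' ->
  Rabs (fA f0 f1 p p' - fB f0 f1 p p') <= L * Rabs (p - p').
Proof.
  intros HL Hp Hp'; unfold fA, fB; rewrite update_sub, Rabs_mult, Rmult_comm.
  apply Rmult_le_compat_r; [apply Rabs_pos|].
  now apply HL, AA1_rate_in01.
Qed.

Lemma traj_S (f0 f1 : R -> R -> R) (a b : R) (t : nat) :
  traj f0 f1 a b (S t) =
  (fA f0 f1 (fst (traj f0 f1 a b t)) (snd (traj f0 f1 a b t)),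
   fB f0 f1 (fst (traj f0 f1 a b t)) (snd (traj f0 f1 a b t))).
Proof. simpl; now destruct (traj f0 f1 a b t). Qed.

Lemma traj_in01 (f0 f1 : R -> R -> R) (a b : R) (t : nat) :
  dynamics_fun f0 -> dynamics_fun f1 -> in01 a -> in01 b ->
  in01 (fst (traj f0 f1 a b t)) /\ in01 (snd (traj f0 f1 a b t)).
Proof.
  intros D0 D1 Ha Hb; induction t as [|t [IHa IHb]]; [now split|].
  assert (H0 : in01 0) by (unfold in01; lra).
  rewrite traj_S; unfold fA, fB; simpl.
  split; apply update_in01; auto; now apply AA1_rate_in01.
Qed.

Theorem mainTheorem4 (f0 f1 : R -> R -> R) (L : R) :
  dynamics_fun f0 -> dynamics_fun f1 ->
  is_L_AA1 f0 f1 L -> L < 1 ->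
  (forall p p', in01 p -> in01 p' ->
     Rabs (fA f0 f1 p p' - fB f0 f1 p p') <= L * Rabs (p - p')) /\
  (forall pA0 pB0, in01 pA0 -> in01 pB0 ->
     Un_cv (fun t => Rabs (fst (traj f0 f1 pA0 pB0 t) - snd (traj f0 f1 pA0 pB0 t))) 0).
Proof.
  intros D0 D1 [HL [q [_ Hq]]] HL1.
  assert (L0 : 0 <= L) by (rewrite <- Hq; apply Rabs_pos).
  split; [intros; now apply fA_fB_lipschitz|].
  intros a b Ha Hb.
  apply Un_cv_contraction with L; [lra | intros; apply Rabs_pos|].
  intros t; destruct (traj_in01 f0 f1 a b t D0 D1 Ha Hb).
  rewrite traj_S; now apply fA_fB_lipschitz.
Qed.
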